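(* Let $M\subset \bigoplus_{i=1}^r A[-\delta_i]$ be a graded right $A$-submodule, and let $\delta'_i$ be integers with $\delta_i\ge\delta'_i\ge 0$. Put $\bar M=H(M)\subset\bigoplus_{i=1}^r \bar A[-\delta'_i]$ and $\bar M' = \bar M\cap \bigoplus_{i} t^{\delta_i-\delta'_i}A[-\delta_i]$, where $\bigoplus_i t^{\delta_i-\delta'_i}A[-\delta_i]$ denotes the set of elements $\sum_i \bar e_i\, t^{\delta_i-\delta'_i} a_i$ with $a_i\in A$. Then $\eta(M)=\bar M'$. In particular $\dim_{\mathbb K} M_d=\dim_{\mathbb K}\bar M'_d$ for all $d\ge 0$.
   Context: Let $\mathbb K$ be a field and $F=\mathbb K\langle x_1,\dots,x_n\rangle$ the free associative algebra with the standard grading ($\deg x_i=1$). Let $I\subset F$ be a graded two-sided ideal and $A=F/I$. For an integer $\delta\ge0$, $A[-\delta]$ denotes $A$ with shifted grading $A[-\delta]_d=A_{d-\delta}$ (and $0$ for $d<\delta$). $\bigoplus_{i=1}^r A[-\delta_i]$ is the graded free right $A$-module with canonical basis $e_1,\dots,e_r$, $\deg e_i=\delta_i$. A right submodule $M$ is graded if it is the sum of its homogeneous components $M_d$. Let $t$ be a new variable, $\bar F=\mathbb K\langle x_1,\dots,x_n,t\rangle$ with standard grading, $\bar I$ the two-sided ideal of $\bar F$ generated by $I$, and $\bar A=\bar F/\bar I$; $A$ embeds canonically in $\bar A$. For integers $\delta_i\ge\delta'_i\ge0$, $\bigoplus_i\bar A[-\delta'_i]$ is the graded free right $\bar A$-module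 with canonical basis $\bar e_i$, $\deg\bar e_i=\delta'_i$, and $\eta:\bigoplus_i A[-\delta_i]\to\bigoplus_i\bar A[-\delta'_i]$ is the injective graded right $A$-module homomorphism $e_i\mapsto \bar e_i t^{\delta_i-\delta'_i}$. For a graded right $A$-submodule $M$, the component homogenization $H(M)$ is the right $\bar A$-submodule of $\bigoplus_i\bar A[-\delta'_i]$ generated by $\eta(M)$. *)

From HB Require Import structures.
From mathcomp Require Import all_boot all_order all_algebra.
Set Implicit Arguments. Unset Strict Implicit. Unset Printing Implicit Defensive.
Import GRing.Theory.
Local Open Scope ring_scope.

(* Noncommutative formal series over an alphabet X with coefficients in K:
   functions from words (seq X) to K.  The free associative algebra
   K<X> is the set of series of bounded degree (= finite support, X finite). *)
Definition ser (K : fieldType) (X : Type) := seq X -> K.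

Definition ser_zero (K : fieldType) (X : Type) : ser K X := fun _ => 0.
Definition ser_add (K : fieldType) (X : Type) (f g : ser K X) : ser K X :=
  fun w => f w + g w.
Definition ser_sub (K : fieldType) (X : Type) (f g : ser K X) : ser K X :=
  fun w => f w - g w.
Definition ser_mul (K : fieldType) (X : Type) (f g : ser K X) : ser K X :=
  fun w => \sum_(i < (size w).+1) f (take i w) * g (drop i w).

Definition is_poly (K : fieldType) (X : Type) (f : ser K X) : Prop :=
  exists N : nat, forall w, (N <= size w)%N -> f w = 0.

Definition hcomp (K : fieldType) (X : Type) (d : nat) (f : ser K X) : ser K X :=
  fun w => if size w == d then f w else 0.

Definition graded_ideal (K : fieldType) (X : Type) (I : ser K X -> Prop) : Prop :=
  [/\ forall f, I f -> is_poly f,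
      I (@ser_zero K X),
      forall f g, I f -> I g -> I (ser_add f g),
      forall f u, I f -> is_poly u -> I (ser_mul u f) /\ I (ser_mul f u)
    & forall f d, I f -> I (hcomp d f)].

(* Tuples (elements of the free module on e_1..e_r) are 'I_r -> ser K X.
   Equality modulo an ideal J in every coordinate. *)
Definition tequiv (K : fieldType) (X : Type) (r : nat) (J : ser K X -> Prop)
  (m m' : 'I_r -> ser K X) : Prop := forall i, J (ser_sub (m i) (m' i)).

Definition tcomp (K : fieldType) (X : Type) (r : nat) (deg : 'I_r -> nat) (d : nat)
  (m : 'I_r -> ser K X) : 'I_r -> ser K X :=
  fun i => if (deg i <= d)%N then hcomp (d - deg i) (m i) else @ser_zero K X.

Definition thom (K : fieldType) (X : Type) (r : nat) (deg : 'I_r -> nat) (d : nat)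
  (m : 'I_r -> ser K X) : Prop :=
  forall i w, (size w + deg i != d)%N -> m i w = 0.

(* A graded right A-submodule M of (+)_i A[-deg i], A = K<X>/I, encoded by its
   preimage Mt in (+)_i K<X>[-deg i] (which is saturated w.r.t. I). *)
Definition graded_submodule (K : fieldType) (X : Type) (I : ser K X -> Prop)
  (r : nat) (deg : 'I_r -> nat) (Mt : ('I_r -> ser K X) -> Prop) : Prop :=
  [/\ (forall m, Mt m -> forall i, is_poly (m i)) /\
      Mt (fun _ => @ser_zero K X),
      forall m m', Mt m -> Mt m' -> Mt (fun i => ser_add (m i) (m' i)),
      forall m u, Mt m -> is_poly u -> Mt (fun i => ser_mul (m i) u),
      forall m m', Mt m -> (forall i, is_poly (m' i)) -> tequiv I m m' -> Mt m'
    & forall m d, Mt m -> Mt (tcomp deg d m)].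

(* The extended alphabet: Some x = x, None = the new variable t. *)
Definition emb (K : fieldType) (X : Type) (f : ser K X) : ser K (option X) :=
  fun w => if size (pmap id w) == size w then f (pmap id w) else 0.

Definition tpow (K : fieldType) (X : Type) (k : nat) : ser K (option X) :=
  fun w => if (size w == k) && all (fun o : option X => ~~ isSome o) w then 1 else 0.

Definition gen_ideal (K : fieldType) (X : Type) (I : ser K X -> Prop)
  (g : ser K (option X)) : Prop :=
  exists (N : nat) (u : 'I_N -> ser K (option X)) (f : 'I_N -> ser K X)
         (v : 'I_N -> ser K (option X)),
    (forall j, [/\ is_poly (u j), I (f j) & is_poly (v j)]) /\
    forall w, g w = \sum_(j < N) ser_mul (ser_mul (u j) (emb (f j))) (v j) w.

(* eta : e_i |-> bar e_i t^(k i), with k i = delta i - delta' i *)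
Definition eta (K : fieldType) (X : Type) (r : nat) (k : 'I_r -> nat)
  (m : 'I_r -> ser K X) : 'I_r -> ser K (option X) :=
  fun i => ser_mul (@tpow K X (k i)) (emb (m i)).

(* preimage of eta(M) in (+)_i K<X,t> *)
Definition etaM (K : fieldType) (X : Type) (I : ser K X -> Prop) (r : nat)
  (k : 'I_r -> nat) (Mt : ('I_r -> ser K X) -> Prop)
  (g : 'I_r -> ser K (option X)) : Prop :=
  (forall i, is_poly (g i)) /\
  exists m, Mt m /\ tequiv (gen_ideal I) g (eta k m).

(* preimage of H(M): right barA-submodule generated by eta(M) *)
Definition Hhom (K : fieldType) (X : Type) (I : ser K X -> Prop) (r : nat)
  (k : 'I_r -> nat) (Mt : ('I_r -> ser K X) -> Prop)
  (g : 'I_r -> ser K (option X)) : Prop :=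
  (forall i, is_poly (g i)) /\
  exists (N : nat) (ms : 'I_N -> 'I_r -> ser K X) (us : 'I_N -> ser K (option X)),
    (forall j, Mt (ms j) /\ is_poly (us j)) /\
    tequiv (gen_ideal I) g
      (fun i w => \sum_(j < N) ser_mul (eta k (ms j) i) (us j) w).

(* preimage of barM' = H(M) /\ (+)_i t^(k i) A[-delta i] *)
Definition Mbar' (K : fieldType) (X : Type) (I : ser K X -> Prop) (r : nat)
  (k : 'I_r -> nat) (Mt : ('I_r -> ser K X) -> Prop)
  (g : 'I_r -> ser K (option X)) : Prop :=
  Hhom I k Mt g /\
  exists a : 'I_r -> ser K X,
    (forall i, is_poly (a i)) /\ tequiv (gen_ideal I) g (eta k a).

(* There are N elements of the degree-d component of the submodule (given by its
   preimage P) that are K-linearly independent modulo J.  dim_K P_d is the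
   supremum of such N. *)
Definition indep_family (K : fieldType) (Y : Type) (J : ser K Y -> Prop) (r : nat)
  (deg : 'I_r -> nat) (P : ('I_r -> ser K Y) -> Prop) (d N : nat) : Prop :=
  exists ms : 'I_N -> 'I_r -> ser K Y,
    (forall j, P (ms j) /\ thom deg d (ms j)) /\
    forall c : 'I_N -> K,
      (forall i, J (fun w => \sum_(j < N) c j * ms j i w)) -> forall j, c j = 0.

From Pilot Require Import Defs.
From HB Require Import structures.
From mathcomp Require Import all_boot all_order all_algebra.
From mathcomp Require Import zify ring.
From Stdlib Require Import ClassicalEpsilon FunctionalExtensionality.
Import GRing.Theory.
Local Open Scope ring_scope.
Set Implicit Arguments. Unset Strict Implicit. Unset Printing Implicit Defensive.

(* The substitution t := 1 is a ring map [dehom] from K<X,t> to K<X>: it sends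
   the ideal generated by I into I, is a left inverse of the embedding and
   sends t^k to 1, hence [dehom] inverts [eta].  If g = eta(a) lies in H(M),
   say g = sum_j eta(m_j) u_j modulo the ideal, applying [dehom] gives
   a = sum_j m_j dehom(u_j) modulo I, so a lies in M by saturation.
   For the dimensions, [eta] shifts degrees by delta_i - delta'_i and, by
   [dehom] again, preserves independence modulo the ideals; conversely a
   homogeneous independent family of bar M' of degree d is congruent to eta of
   a family of M, and since the ideal generated by I is graded the degree-d
   components of that family do the same job. *)

Section Series.
Variable K : fieldType.

Definition ser_cst (T : Type) (c : K) : ser K T := fun w => if w is [::] then c else 0.

Definition deg_lt (T : Type) (g : ser K T) (N : nat) :=
  forall w, (N <= size w)%N -> g w = 0.

Lemma deg_lt_mono T (g : ser K T) N M : (N <= M)%N -> deg_lt g N -> deg_lt g M.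
Proof. by move=> NM H w hw; apply: H; apply: leq_trans hw. Qed.

Lemma deg_lt_mul T (u v : ser K T) Nu Nv :
  deg_lt u Nu -> deg_lt v Nv -> deg_lt (ser_mul u v) (Nu + Nv).
Proof.
move=> Hu Hv w Hw; rewrite /ser_mul big1 // => i _; have hi := ltn_ord i.
case: (leqP Nu i) => h; first by rewrite Hu ?mul0r // size_takel //; lia.
by rewrite Hv ?mulr0 // size_drop; lia.
Qed.

Lemma deg_lt_sub T (u v : ser K T) Nu Nv :
  deg_lt u Nu -> deg_lt v Nv -> deg_lt (ser_sub u v) (Nu + Nv).
Proof. by move=> Hu Hv w Hw; rewrite /ser_sub Hu ?Hv ?subrr //; lia. Qed.

Lemma deg_lt_uniform T N (F : 'I_N -> ser K T) :
  (forall j, is_poly (F j)) -> exists B, forall j, deg_lt (F j) B.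
Proof.
elim: N F => [|N IH] F HF; first by exists 0%N => -[].
have [B1 H1] := IH (fun j => F (lift ord0 j)) (fun j => HF _).
have [B0 H0] := HF ord0.
exists (B0 + B1)%N => j; case: (unliftP ord0 j) => [j'|] ->.
  exact: deg_lt_mono (leq_addl _ _) (H1 j').
exact: deg_lt_mono (leq_addr _ _) H0.
Qed.

Lemma poly_mul T (u v : ser K T) : is_poly u -> is_poly v -> is_poly (ser_mul u v).
Proof. by move=> [Nu Hu] [Nv Hv]; exists (Nu + Nv)%N; apply: deg_lt_mul. Qed.

Lemma poly_scale T c (f : ser K T) : is_poly f -> is_poly (fun w => c * f w).
Proof. by move=> [N H]; exists N => w hw; rewrite H ?mulr0. Qed.

Lemma poly_sum T N (F : 'I_N -> ser K T) :
  (forall j, is_poly (F j)) -> is_poly (fun w => \sum_(j < N) F j w).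
Proof.
by move=> /deg_lt_uniform[B HB]; exists B => w hw; rewrite big1 // => j _; rewrite HB.
Qed.

Lemma poly_cst T c : is_poly (@ser_cst T c).
Proof. by exists 1%N => -[|x w]. Qed.

Lemma poly_hcomp T d (f : ser K T) : is_poly (hcomp d f).
Proof. by exists d.+1 => w hw; rewrite /hcomp; case: eqP => // e; lia. Qed.

Lemma poly_emb (X : Type) (f : ser K X) : is_poly f -> is_poly (emb f).
Proof.
by move=> [N H]; exists N => w hw; rewrite /emb; case: eqP => // e; apply: H; rewrite e.
Qed.

Lemma poly_tpow (X : Type) k : is_poly (@tpow K X k).
Proof. by exists k.+1 => w hw; rewrite /tpow; case: eqP => //= e; lia. Qed.

Lemma mul_cst T c (f : ser K T) : ser_mul (@ser_cst T c) f = fun w => c * f w.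
Proof.
apply: functional_extensionality => w; rewrite /ser_mul big_ord_recl /= take0 drop0.
rewrite big1 ?addr0 // => i _; case: w i => [|x w] i //=; first by case: i.
by rewrite mul0r.
Qed.

Lemma mul_1l T (f : ser K T) : ser_mul (@ser_cst T 1) f = f.
Proof. by rewrite mul_cst; apply: functional_extensionality => w; rewrite mul1r. Qed.

Lemma mul_1r T (f : ser K T) : ser_mul f (@ser_cst T 1) = f.
Proof.
apply: functional_extensionality => w.
rewrite /ser_mul big_ord_recr /= take_size drop_size /= mulr1 big1 ?add0r // => i _.
case E: (drop i w) => [|y s]; last by rewrite mulr0.
have := congr1 size E; rewrite size_drop /=; have := ltn_ord i; lia.
Qed.

Lemma mul_suml T N (F : 'I_N -> ser K T) g :
  ser_mul (fun w => \sum_(j < N) F j w) g = fun w => \sum_(j < N) ser_mul (F j) g w.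
Proof.
apply: functional_extensionality => w; rewrite /ser_mul.
under eq_bigr do rewrite mulr_suml. exact: exchange_big.
Qed.

Lemma mul_scalel T c (f g : ser K T) :
  ser_mul (fun w => c * f w) g = fun w => c * ser_mul f g w.
Proof.
apply: functional_extensionality => w; rewrite /ser_mul mulr_sumr.
by apply: eq_bigr => i _; rewrite mulrA.
Qed.

Lemma big_seq_single (T : eqType) (s : seq T) x0 (F : T -> K) :
  uniq s -> (forall x, x != x0 -> F x = 0) ->
  \sum_(x <- s) F x = if x0 \in s then F x0 else 0.
Proof.
move=> us F0; case: ifP => xs.
  by rewrite (bigD1_seq x0) //= big1 ?addr0.
rewrite big1_seq // => x /andP[_ xs']; apply: F0.
by apply: contraFneq xs => <-.
Qed.

Lemma big_ord_single m j0 (F : nat -> K) :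
  (forall j, (j < m)%N -> j != j0 -> F j = 0) ->
  \sum_(j < m) F j = if (j0 < m)%N then F j0 else 0.
Proof.
move=> F0; rewrite -(big_ord1_eq (@GRing.add K)) [RHS]big_mkcond; apply: eq_bigr => j _.
by case: eqP => // /eqP; apply: F0.
Qed.

Lemma big_cond_subseq (T : eqType) (s t : seq T) (F : T -> K) :
  uniq s -> uniq t -> {subset t <= s} ->
  (forall x, x \in s -> x \notin t -> F x = 0) ->
  \sum_(x <- s) F x = \sum_(x <- t) F x.
Proof.
move=> us ut ts F0; rewrite (bigID (mem t)) /= [X in _ + X]big1_seq ?addr0; last first.
  by move=> x /andP[nt xs]; apply: F0.
rewrite -big_filter; apply: perm_big; apply: uniq_perm => //; first exact: filter_uniq.
by move=> x; rewrite mem_filter; case xt: (x \in t) => //=; apply: ts.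
Qed.

Lemma if_mul1 (c : bool) (G : K) : (if c then G else 0) = G * (if c then 1 else 0).
Proof. by case: c; rewrite ?mulr1 ?mulr0. Qed.

Lemma count_factorizations (T : eqType) (a b x : seq T) :
  \sum_(j < (size x).+1) (if (a == take j x) && (b == drop j x) then 1 else 0 : K)
  = if a ++ b == x then 1 else 0.
Proof.
rewrite (@big_ord_single _ (size a)
    (fun j => if (a == take j x) && (b == drop j x) then 1 else 0)); last first.
  by move=> j hj ja; case: eqP => // ea; move: ja; rewrite ea size_takel // eqxx.
case: ifP => hs.
  case: (eqVneq (a ++ b) x) => [<-|nx]; first by rewrite take_size_cat // drop_size_cat // !eqxx.
  by case: eqP => // ea; case: eqP => // eb; move/eqP: nx; rewrite ea eb cat_take_drop.
by case: eqP => // ex; move: hs; rewrite -ex size_cat; lia.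
Qed.

Section Dehomogenization.
Variable X : finType.
Local Notation Y := (option X).

Fixpoint words_lt (B : nat) : seq (seq Y) :=
  if B is B'.+1 then [::] :: [seq o :: x | o <- enum {: Y}, x <- words_lt B'] else [::].

Lemma mem_words_lt B x : (x \in words_lt B) = (size x < B)%N.
Proof.
elim: B x => [|B IH] [|o x] //=; rewrite in_cons /=.
apply/allpairsP/idP => [[[o' x']] /= [_ hx [eo ex]]|hx]; first by rewrite ex ltnS -IH.
by exists (o, x); rewrite /= mem_enum IH -ltnS.
Qed.

Lemma uniq_words_lt B : uniq (words_lt B).
Proof.
elim: B => [|B IH] //=; apply/andP; split; first by apply/allpairsP => -[[o x]] /= [_ _].
apply: allpairs_uniq => //; first exact: enum_uniq.
by move=> [o x] [o' x'] _ _ /= [-> ->].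
Qed.

Lemma ser_mul_words B (u v : ser K Y) x : (size x < B)%N ->
  ser_mul u v x = \sum_(a <- words_lt B) \sum_(b <- words_lt B)
                    (if a ++ b == x then u a * v b else 0).
Proof.
move=> hx; set W := words_lt B; have uW : uniq W by apply: uniq_words_lt.
transitivity (\sum_(j < (size x).+1) \sum_(a <- W) \sum_(b <- W)
    (if (a == take j x) && (b == drop j x) then u a * v b else 0)).
  apply: eq_bigr => j _; have hj := ltn_ord j.
  rewrite (@big_seq_single _ _ (take j x)) //; last first.
    by move=> a na; rewrite big1 // => b _; rewrite (negbTE na).
  rewrite mem_words_lt size_take_min ifT; last by lia.
  rewrite eqxx /= (@big_seq_single _ _ (drop j x)) //; last by move=> b /negbTE ->.
  by rewrite mem_words_lt size_drop eqxx ifT // (leq_ltn_trans (leq_subr _ _) hx).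
rewrite exchange_big; apply: eq_bigr => a _; rewrite exchange_big; apply: eq_bigr => b _.
rewrite [RHS]if_mul1 -(count_factorizations a b x) mulr_sumr; apply: eq_bigr => j _.
by rewrite if_mul1.
Qed.

(* The substitution t := 1, correct as soon as g has degree < B. *)
Definition dehomB B (g : ser K Y) : ser K X :=
  fun w => \sum_(x <- words_lt B) (if pmap id x == w then g x else 0).

Lemma deg_lt_dehomB B g : deg_lt (dehomB B g) B.
Proof.
move=> w hw; rewrite /dehomB big1_seq // => x /andP[_]; rewrite mem_words_lt => hx.
case: eqP => // e; have : (size w <= size x)%N by rewrite -e size_pmap count_size.
lia.
Qed.

Lemma dehomB_stable B N g : deg_lt g N -> (N <= B)%N -> dehomB B g = dehomB N g.
Proof.
move=> Hg NB; apply: functional_extensionality => w; rewrite /dehomB.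
apply: big_cond_subseq; [exact: uniq_words_lt | exact: uniq_words_lt | | ].
  by move=> x; rewrite !mem_words_lt => h; apply: leq_trans NB.
by move=> x _; rewrite mem_words_lt -leqNgt => h; rewrite Hg // if_same.
Qed.

(* On series that are not polynomials the chosen bound, hence the value, is junk. *)
Definition dehom (g : ser K Y) : ser K X :=
  dehomB (epsilon (inhabits 0%N) (deg_lt g)) g.

Lemma dehomE g N : deg_lt g N -> dehom g = dehomB N g.
Proof.
move=> HN; have Heps := epsilon_spec (inhabits 0%N) (deg_lt g) (ex_intro _ N HN).
rewrite /dehom -(dehomB_stable Heps (leq_addr N _)) (dehomB_stable HN) //.
exact: leq_addl.
Qed.

Lemma poly_dehom g : is_poly (dehom g).
Proof. by exists (epsilon (inhabits 0%N) (deg_lt g)); apply: deg_lt_dehomB. Qed.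

Lemma dehom_lin N (c : 'I_N -> K) (F : 'I_N -> ser K Y) :
  (forall j, is_poly (F j)) ->
  dehom (fun w => \sum_(j < N) c j * F j w) = fun w => \sum_(j < N) c j * dehom (F j) w.
Proof.
move=> /deg_lt_uniform[B HB].
rewrite (@dehomE _ B); last by move=> w hw; rewrite big1 // => j _; rewrite HB ?mulr0.
apply: functional_extensionality => w; under [RHS]eq_bigr do rewrite (dehomE (HB _)).
rewrite /dehomB.
transitivity (\sum_(x <- words_lt B) \sum_(j < N) c j * (if pmap id x == w then F j x else 0)).
  by apply: eq_bigr => x _; case: ifP => _ //; rewrite big1 // => j _; rewrite mulr0.
by rewrite exchange_big; apply: eq_bigr => j _; rewrite mulr_sumr.
Qed.

Lemma dehom_sum N (F : 'I_N -> ser K Y) :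
  (forall j, is_poly (F j)) ->
  dehom (fun w => \sum_(j < N) F j w) = fun w => \sum_(j < N) dehom (F j) w.
Proof.
move=> HF; have := dehom_lin (fun _ => 1) HF.
have -> : (fun w => \sum_(j < N) 1 * F j w) = (fun w => \sum_(j < N) F j w).
  by apply: functional_extensionality => w; under eq_bigr do rewrite mul1r.
by move=> ->; apply: functional_extensionality => w; under eq_bigr do rewrite mul1r.
Qed.

Lemma dehom_sub f g :
  is_poly f -> is_poly g -> dehom (ser_sub f g) = ser_sub (dehom f) (dehom g).
Proof.
move=> [nf Hf] [ng Hg].
rewrite (dehomE (deg_lt_sub Hf Hg)) (dehomE (deg_lt_mono (leq_addr ng nf) Hf)).
rewrite (dehomE (deg_lt_mono (leq_addl nf ng) Hg)).
apply: functional_extensionality => w; rewrite /dehomB /ser_sub -sumrB.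
by apply: eq_bigr => x _; case: ifP; rewrite ?subr0.
Qed.

Lemma dehom_mul u v :
  is_poly u -> is_poly v -> dehom (ser_mul u v) = ser_mul (dehom u) (dehom v).
Proof.
move=> [Nu Hu] [Nv Hv]; set B := (Nu + Nv)%N; set W := words_lt B.
rewrite (dehomE (deg_lt_mul Hu Hv)) (dehomE (deg_lt_mono (leq_addr Nv Nu) Hu)).
rewrite (dehomE (deg_lt_mono (leq_addl Nu Nv) Hv)).
apply: functional_extensionality => w.
(* Both sides are sums over the pairs (a, b) with pmap id a ++ pmap id b = w. *)
transitivity (\sum_(a <- W) \sum_(b <- W)
    (if pmap id a ++ pmap id b == w then u a * v b else 0)).
  transitivity (\sum_(x <- W) \sum_(a <- W) \sum_(b <- W)
      (if (pmap id x == w) && (a ++ b == x) then u a * v b else 0)).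
    rewrite /dehomB big_seq_cond [RHS]big_seq_cond; apply: eq_bigr => x /andP[xW _].
    rewrite mem_words_lt in xW; rewrite (ser_mul_words _ _ xW); case: ifP => _ //.
    by rewrite big1 // => a _; rewrite big1.
  rewrite exchange_big; apply: eq_bigr => a _; rewrite exchange_big; apply: eq_bigr => b _.
  rewrite (@big_seq_single _ _ (a ++ b)) ?uniq_words_lt //; last first.
    by move=> x nx; rewrite [a ++ b == x]eq_sym (negbTE nx) andbF.
  rewrite eqxx andbT pmap_cat mem_words_lt; case: ifP => // h.
  rewrite /B size_cat in h; case: (leqP Nu (size a)) => ha.
    by rewrite Hu ?mul0r ?if_same.
  rewrite Hv ?mulr0 ?if_same //; move: h ha; set sa := size a; set sb := size b; lia.
rewrite /ser_mul.
transitivity (\sum_(i < (size w).+1) \sum_(a <- W) \sum_(b <- W)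
   (if (pmap id a == take i w) && (pmap id b == drop i w) then u a * v b else 0)).
  rewrite [RHS]exchange_big; apply: eq_bigr => a _.
  rewrite [RHS]exchange_big; apply: eq_bigr => b _.
  rewrite if_mul1 -(count_factorizations (pmap id a) (pmap id b) w) mulr_sumr.
  by apply: eq_bigr => j _; rewrite [RHS]if_mul1.
apply: eq_bigr => i _; rewrite /dehomB mulr_suml; apply: eq_bigr => a _.
rewrite mulr_sumr; apply: eq_bigr => b _.
by case: (pmap id a == take i w); case: (pmap id b == drop i w); rewrite ?mulr0 ?mul0r.
Qed.

Lemma emb_shape (x : seq Y) : size (pmap id x) == size x -> x = map Some (pmap id x).
Proof.
elim: x => //= -[a|] x IH /=; first by move=> /IH {1}->.
move=> /eqP h; have : (size (pmap id x) <= size x)%N by rewrite size_pmap count_size.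
by rewrite h ltnn.
Qed.

Lemma dehom_emb f : is_poly f -> dehom (emb f) = f.
Proof.
have pmap_Some (w : seq X) : pmap id (map Some w) = w by elim: w => //= a w ->.
move=> [N HN].
have HeN : deg_lt (emb f) N by move=> w hw; rewrite /emb; case: eqP => // e; rewrite HN ?e.
rewrite (dehomE HeN); apply: functional_extensionality => w.
rewrite /dehomB (@big_seq_single _ _ (map Some w)) ?uniq_words_lt //; last first.
  move=> x nx; case: eqP => // e; rewrite /emb; case: eqP => // /eqP hs.
  by move: nx; rewrite {1}(emb_shape hs) e eqxx.
rewrite mem_words_lt size_map; case: ltnP => h; last by rewrite HN.
by rewrite pmap_Some eqxx /emb pmap_Some size_map eqxx.
Qed.

Lemma dehom_tpow k : dehom (@tpow K X k) = @ser_cst _ 1.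
Proof.
have none_shape (x : seq Y) : all (fun o : Y => ~~ isSome o) x -> x = nseq (size x) None.
  by elim: x => //= -[a|] x IH //= /IH {1}->.
have Hb : deg_lt (@tpow K X k) k.+1 by move=> w hw; rewrite /tpow; case: eqP => //= e; lia.
rewrite (dehomE Hb); apply: functional_extensionality => w.
rewrite /dehomB (@big_seq_single _ _ (nseq k None)) ?uniq_words_lt //; last first.
  move=> x nx; case: eqP => // e; rewrite /tpow; case: ifP => // /andP[/eqP sk al].
  by move: nx; rewrite {1}(none_shape _ al) sk eqxx.
rewrite mem_words_lt size_nseq ltnSn.
have -> : pmap id (nseq k (@None X)) = [::] by elim: k {Hb}.
by rewrite /tpow size_nseq eqxx all_nseq /= orbT; case: w.
Qed.

End Dehomogenization.

Lemma tpow_mul (X : Type) k (h : ser K (option X)) w :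
  ser_mul (tpow K k) h w =
  if (k <= size w)%N && all (fun o : option X => ~~ isSome o) (take k w)
  then h (drop k w) else 0.
Proof.
rewrite /ser_mul (@big_ord_single _ k (fun j => tpow K k (take j w) * h (drop j w))).
  rewrite ltnS; case: leqP => //= hk.
  by rewrite /tpow size_takel // eqxx /=; case: ifP; rewrite ?mul1r ?mul0r.
move=> j hj jk; rewrite /tpow size_takel; last by rewrite -ltnS.
by rewrite (negbTE jk) mul0r.
Qed.

Lemma hcomp_emb (X : Type) d (f : ser K X) : hcomp d (emb f) = emb (hcomp d f).
Proof.
apply: functional_extensionality => w; rewrite /hcomp /emb.
case: eqP => [e|ne]; first by rewrite e; case: ifP.
by case: eqP => // e; rewrite e; case: eqP.
Qed.

Lemma hcomp_mul T d (u v : ser K T) :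
  hcomp d (ser_mul u v) =
  fun w => \sum_(i < d.+1) ser_mul (hcomp i u) (hcomp (d - i) v) w.
Proof.
apply: functional_extensionality => w; rewrite /ser_mul exchange_big /=.
transitivity (\sum_(l < (size w).+1)
   (if size w == d then u (take l w) * v (drop l w) else 0)).
  by rewrite /hcomp; case: eqP => // _; rewrite big1.
apply: eq_bigr => l _; have hl := ltn_ord l.
rewrite (@big_ord_single _ l (fun i => hcomp i u (take l w) * hcomp (d - i) v (drop l w))).
  rewrite /hcomp size_takel; last by lia.
  rewrite eqxx size_drop; case: eqP => e.
    by rewrite ifT; [rewrite ifT //; apply/eqP|]; lia.
  case: ifP => // ld; case: eqP => e2; last by rewrite mulr0.
  by exfalso; apply: e; move/eqP: e2; move: ld hl; set sw := size w; lia.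
move=> i hi il; rewrite /hcomp size_takel; last by lia.
by rewrite eq_sym (negbTE il) mul0r.
Qed.

Lemma hcomp_sum T d N (F : 'I_N -> ser K T) :
  hcomp d (fun w => \sum_(j < N) F j w) = fun w => \sum_(j < N) hcomp d (F j) w.
Proof.
by apply: functional_extensionality => w; rewrite /hcomp; case: ifP => // _; rewrite big1.
Qed.

Lemma hcomp_sub T d (f g : ser K T) : hcomp d (ser_sub f g) = ser_sub (hcomp d f) (hcomp d g).
Proof.
by apply: functional_extensionality => w; rewrite /hcomp /ser_sub; case: ifP => // _; rewrite subrr.
Qed.

Lemma hcomp_tpow_mul (X : Type) D k (f : ser K X) :
  hcomp D (ser_mul (tpow K k) (emb f)) =
  if (k <= D)%N then ser_mul (tpow K k) (emb (hcomp (D - k) f)) else @ser_zero K _.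
Proof.
apply: functional_extensionality => w; case: ifP => hk; last first.
  rewrite /hcomp tpow_mul /ser_zero; case: eqP => // e.
  by case: ifP => // /andP[h _]; move: hk h; rewrite e => ->.
rewrite -hcomp_emb /hcomp !tpow_mul size_drop; case: eqP => e.
  by case: ifP => // /andP[h _]; rewrite e eqxx.
by case: ifP => // /andP[h _]; case: eqP => // e2; exfalso; apply: e; lia.
Qed.

Lemma tcomp_thom (X : Type) r (deg : 'I_r -> nat) d (m : 'I_r -> ser K X) :
  thom deg d (tcomp deg d m).
Proof.
move=> i w hw; rewrite /tcomp; case: ifP => h //; rewrite /hcomp; case: eqP => // e.
by move/eqP: hw; rewrite e; lia.
Qed.

Lemma thom_hcomp (X : Type) r (deg : 'I_r -> nat) d (m : 'I_r -> ser K X) i :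
  thom deg d m -> (deg i <= d)%N -> hcomp (d - deg i) (m i) = m i.
Proof.
move=> Hm hi; apply: functional_extensionality => w; rewrite /hcomp.
case: eqP => // e; rewrite Hm //; apply/eqP; move: e hi; set sw := size w; lia.
Qed.

Section EtaMap.
Variables (X : Type) (r : nat) (k : 'I_r -> nat).

Lemma poly_eta (m : 'I_r -> ser K X) :
  (forall i, is_poly (m i)) -> forall i, is_poly (Defs.eta k m i).
Proof. by move=> hm i; apply: poly_mul; [exact: poly_tpow | apply: poly_emb]. Qed.

Lemma eta_lin N (c : 'I_N -> K) (ms : 'I_N -> 'I_r -> ser K X) i w :
  Defs.eta k (fun i w => \sum_(j < N) c j * ms j i w) i w =
  \sum_(j < N) c j * Defs.eta k (ms j) i w.
Proof.
rewrite /Defs.eta tpow_mul; under [RHS]eq_bigr do rewrite tpow_mul.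
case: ifP => _; last by rewrite big1 // => j _; rewrite mulr0.
by rewrite /emb; case: ifP => _ //; rewrite big1 // => j _; rewrite mulr0.
Qed.

Lemma eta_tcomp delta d (m : 'I_r -> ser K X) i :
  Defs.eta k (tcomp delta d m) i =
  if (delta i <= d)%N then ser_mul (tpow K (k i)) (emb (hcomp (d - delta i) (m i)))
  else @ser_zero K _.
Proof.
rewrite /Defs.eta /tcomp; case: ifP => // _; apply: functional_extensionality => w.
by rewrite tpow_mul /emb /ser_zero; case: ifP => //; case: ifP.
Qed.

Lemma eta_thom delta delta' d (m : 'I_r -> ser K X) :
  (forall i, k i + delta' i = delta i)%N -> thom delta d m -> thom delta' d (Defs.eta k m).
Proof.
move=> Hk Hm i w hw; rewrite /Defs.eta tpow_mul; case: ifP => // /andP[hki _].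
rewrite /emb; case: eqP => // e; apply: Hm; rewrite e size_drop -Hk.
by move: hki hw; set sw := size w; lia.
Qed.

End EtaMap.

Section Ideals.
Variables (X : Type) (I : ser K X -> Prop).

Definition join_ord (A : Type) N1 N2 (a : 'I_N1 -> A) (b : 'I_N2 -> A) (j : 'I_(N1 + N2)) : A :=
  match split j with inl x => a x | inr y => b y end.

Lemma gen_ideal_ext (g h : ser K (option X)) :
  (forall w, g w = h w) -> gen_ideal I g -> gen_ideal I h.
Proof. by move=> E [N [u [f [v [H1 H2]]]]]; exists N, u, f, v; split => // w; rewrite -E. Qed.

Lemma gen_ideal0 (g : ser K (option X)) : (forall w, g w = 0) -> gen_ideal I g.
Proof.
move=> E; exists 0%N, (fun _ => @ser_cst _ 0), (fun _ => @ser_cst _ 0), (fun _ => @ser_cst _ 0).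
by split => [[]//|w]; rewrite big_ord0 E.
Qed.

Lemma mem_gen_ideal u f v : is_poly u -> I f -> is_poly v ->
  gen_ideal I (ser_mul (ser_mul u (emb f)) v).
Proof.
move=> hu hf hv; exists 1%N, (fun _ => u), (fun _ => f), (fun _ => v).
by split => // w; rewrite big_ord1.
Qed.

Lemma gen_idealD g h : gen_ideal I g -> gen_ideal I h -> gen_ideal I (ser_add g h).
Proof.
move=> [N1 [u1 [f1 [v1 [H1 E1]]]]] [N2 [u2 [f2 [v2 [H2 E2]]]]].
exists (N1 + N2)%N, (join_ord u1 u2), (join_ord f1 f2), (join_ord v1 v2); split.
  by move=> j; rewrite /join_ord; case: (split j) => x; [apply: H1|apply: H2].
move=> w; rewrite /ser_add E1 E2 big_split_ord /=; congr (_ + _); apply: eq_bigr => j _.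
  by rewrite /join_ord (unsplitK (inl _ j)).
by rewrite /join_ord (unsplitK (inr _ j)).
Qed.

Lemma gen_idealZ c g : gen_ideal I g -> gen_ideal I (fun w => c * g w).
Proof.
move=> [N [u [f [v [H E]]]]]; exists N, (fun j w => c * u j w), f, v; split.
  by move=> j; have [h1 h2 h3] := H j; split => //; apply: poly_scale.
by move=> w; rewrite E mulr_sumr; apply: eq_bigr => j _; rewrite !mul_scalel.
Qed.

Lemma gen_ideal_sum N (F : 'I_N -> ser K (option X)) :
  (forall j, gen_ideal I (F j)) -> gen_ideal I (fun w => \sum_(j < N) F j w).
Proof.
elim: N F => [|N IH] F HF; first by apply: gen_ideal0 => w; rewrite big_ord0.
apply: (@gen_ideal_ext (ser_add (fun w => \sum_(j < N) F (widen_ord (leqnSn N) j) w) (F ord_max))).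
  by move=> w; rewrite /ser_add big_ord_recr.
by apply: gen_idealD => //; apply: IH.
Qed.

Lemma gen_ideal_lin N (c : 'I_N -> K) (F : 'I_N -> ser K (option X)) :
  (forall j, gen_ideal I (F j)) -> gen_ideal I (fun w => \sum_(j < N) c j * F j w).
Proof.
by move=> H; apply: (gen_ideal_sum (F := fun j w => c j * F j w)) => j; apply: gen_idealZ.
Qed.

Lemma gen_ideal_eta r k (m : 'I_r -> ser K X) i : I (m i) -> gen_ideal I (Defs.eta k m i).
Proof.
move=> hm; rewrite -[Defs.eta k m i]mul_1r.
by apply: mem_gen_ideal => //; [apply: poly_tpow | apply: poly_cst].
Qed.

Hypothesis HI : graded_ideal I.

Lemma ideal_poly f : I f -> is_poly f.
Proof. by case: HI => H _ _ _ _; apply: H. Qed.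

Lemma idealD f g : I f -> I g -> I (ser_add f g).
Proof. by case: HI => _ _ H _ _; apply: H. Qed.

Lemma ideal_mull f u : I f -> is_poly u -> I (ser_mul u f).
Proof. by move=> hf hu; case: HI => _ _ _ H _; have [] := H f u hf hu. Qed.

Lemma ideal_mulr f u : I f -> is_poly u -> I (ser_mul f u).
Proof. by move=> hf hu; case: HI => _ _ _ H _; have [] := H f u hf hu. Qed.

Lemma idealZ c f : I f -> I (fun w => c * f w).
Proof. by move=> hf; rewrite -mul_cst; apply: ideal_mull => //; apply: poly_cst. Qed.

Lemma idealB f g : I f -> I g -> I (ser_sub f g).
Proof.
move=> hf hg; have -> : ser_sub f g = ser_add f (fun w => -1 * g w).
  by apply: functional_extensionality => w; rewrite /ser_add /ser_sub mulN1r.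
by apply: idealD => //; apply: idealZ.
Qed.

Lemma ideal_sum N (F : 'I_N -> ser K X) :
  (forall j, I (F j)) -> I (fun w => \sum_(j < N) F j w).
Proof.
elim: N F => [|N IH] F HF.
  have -> : (fun w => \sum_(j < 0) F j w) = @ser_zero K X.
    by apply: functional_extensionality => w; rewrite big_ord0.
  by case: HI.
have -> : (fun w => \sum_(j < N.+1) F j w) =
   ser_add (fun w => \sum_(j < N) F (widen_ord (leqnSn N) j) w) (F ord_max).
  by apply: functional_extensionality => w; rewrite /ser_add big_ord_recr.
by apply: idealD => //; apply: IH.
Qed.

Lemma gen_ideal_hcomp d g : gen_ideal I g -> gen_ideal I (hcomp d g).
Proof.
move=> [N [u [f [v [H E]]]]].
have -> : g = (fun w => \sum_(j < N) ser_mul (ser_mul (u j) (emb (f j))) (v j) w).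
  exact: functional_extensionality.
rewrite hcomp_sum; apply: gen_ideal_sum => j; have [h1 h2 h3] := H j.
rewrite hcomp_mul; apply: gen_ideal_sum => i.
rewrite hcomp_mul mul_suml; apply: gen_ideal_sum => l.
rewrite hcomp_emb; apply: mem_gen_ideal; try exact: poly_hcomp.
by case: HI => _ _ _ _; apply.
Qed.

End Ideals.

Lemma dehom_gen_ideal (X : finType) (I : ser K X -> Prop) g :
  graded_ideal I -> gen_ideal I g -> I (dehom g).
Proof.
move=> HI [N [u [f [v [H E]]]]].
have -> : g = (fun w => \sum_(j < N) ser_mul (ser_mul (u j) (emb (f j))) (v j) w).
  exact: functional_extensionality.
have Hp j : is_poly (ser_mul (ser_mul (u j) (emb (f j))) (v j)).
  have [h1 /(ideal_poly HI) h2 h3] := H j.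
  by apply: poly_mul => //; apply: poly_mul => //; apply: poly_emb.
rewrite dehom_sum //; apply: ideal_sum => // j; have [h1 h2 h3] := H j.
have hf := ideal_poly HI h2.
rewrite dehom_mul //; last by apply: poly_mul => //; apply: poly_emb.
rewrite dehom_mul ?dehom_emb //; last exact: poly_emb.
exact: (ideal_mulr HI (ideal_mull HI h2 (poly_dehom (u j))) (poly_dehom (v j))).
Qed.

Lemma dehom_eta (X : finType) r k (m : 'I_r -> ser K X) i :
  is_poly (m i) -> dehom (Defs.eta k m i) = m i.
Proof.
move=> hm; rewrite /Defs.eta dehom_mul ?dehom_tpow ?dehom_emb ?mul_1l //.
  exact: poly_tpow.
exact: poly_emb.
Qed.

End Series.

Section ComponentHomogenization.
Variables (K : fieldType) (X : finType) (I : ser K X -> Prop).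
Hypothesis HI : graded_ideal I.
Variables (r : nat) (delta : 'I_r -> nat) (Mt : ('I_r -> ser K X) -> Prop).
Hypothesis HM : graded_submodule I delta Mt.
Variable k : 'I_r -> nat.

Lemma submodule_poly m : Mt m -> forall i, is_poly (m i).
Proof. by have [[Mpoly _] _ _ _ _] := HM; apply: Mpoly. Qed.

Lemma submodule_sum N (F : 'I_N -> 'I_r -> ser K X) :
  (forall j, Mt (F j)) -> Mt (fun i w => \sum_(j < N) F j i w).
Proof.
have [[_ M0] Madd _ _ _] := HM.
elim: N F => [|N IH] F HF.
  suff -> : (fun (i : 'I_r) w => \sum_(j < 0) F j i w) = fun _ => @ser_zero K X by [].
  apply: functional_extensionality => i; apply: functional_extensionality => w.
  by rewrite big_ord0.
have -> : (fun i w => \sum_(j < N.+1) F j i w) =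
   (fun i => ser_add (fun w => \sum_(j < N) F (widen_ord (leqnSn N) j) i w) (F ord_max i)).
  apply: functional_extensionality => i; apply: functional_extensionality => w.
  by rewrite /ser_add big_ord_recr.
by apply: Madd => //; apply: (IH (fun j => F (widen_ord (leqnSn N) j))).
Qed.

Lemma etaM_Mbar' g : etaM I k Mt g -> Mbar' I k Mt g.
Proof.
move=> [gp [m [hm he]]]; split; last by exists m; split => //; apply: submodule_poly.
split => //; exists 1%N, (fun _ => m), (fun _ => @ser_cst K _ 1); split.
  by move=> j; split => //; apply: poly_cst.
by move=> i; apply: gen_ideal_ext (he i) => w; rewrite /ser_sub big_ord1 mul_1r.
Qed.

Lemma Mbar'_etaM g : Mbar' I k Mt g -> etaM I k Mt g.
Proof.
have [_ _ Mmul Msat _] := HM.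
move=> [[gp [N [ms [us [Hmu HS]]]]] [a [ap Ha]]]; split => //; exists a; split => //.
pose m0 i w := \sum_(j < N) ser_mul (ms j i) (dehom (us j)) w.
have Mm0 : Mt m0.
  apply: (submodule_sum (F := fun j i => ser_mul (ms j i) (dehom (us j)))) => j.
  by apply: Mmul; [exact: (Hmu j).1 | exact: poly_dehom].
apply: (Msat _ _ Mm0 ap) => i.
have Pms j : forall i, is_poly (ms j i) := submodule_poly (Hmu j).1.
have PS j : is_poly (ser_mul (Defs.eta k (ms j) i) (us j)).
  by apply: poly_mul; [apply: poly_eta | exact: (Hmu j).2].
have := dehom_gen_ideal HI (HS i); rewrite dehom_sub ?dehom_sum //; last exact: poly_sum.
have -> : (fun w => \sum_(j < N) dehom (ser_mul (Defs.eta k (ms j) i) (us j)) w) = m0 i.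
  apply: functional_extensionality => w; apply: eq_bigr => j _.
  by rewrite dehom_mul ?dehom_eta //; [apply: poly_eta | exact: (Hmu j).2].
have := dehom_gen_ideal HI (Ha i); rewrite dehom_sub ?dehom_eta //; last exact: poly_eta.
move=> Hga Hgm; have -> : ser_sub (m0 i) (a i) =
    ser_sub (ser_sub (dehom (g i)) (a i)) (ser_sub (dehom (g i)) (m0 i)).
  by apply: functional_extensionality => w; rewrite /ser_sub; ring.
exact: idealB.
Qed.

Variable delta' : 'I_r -> nat.
Hypothesis Hk : forall i, (k i + delta' i)%N = delta i.

Lemma eta_tcomp_equiv d g a :
  thom delta' d g -> tequiv (gen_ideal I) g (Defs.eta k a) ->
  tequiv (gen_ideal I) g (Defs.eta k (tcomp delta d a)).
Proof.
move=> Hg Ha i; rewrite eta_tcomp; case: (leqP (delta' i) d) => hdi; last first.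
  have -> : (delta i <= d)%N = false by apply/negbTE; rewrite -ltnNge -(Hk i); lia.
  apply: gen_ideal0 => w; rewrite /ser_sub /ser_zero Hg ?subrr //.
  by apply/eqP; move: hdi; set sw := size w; lia.
have := gen_ideal_hcomp HI (d - delta' i) (Ha i).
rewrite hcomp_sub thom_hcomp // /Defs.eta hcomp_tpow_mul leq_subRL // addnC Hk.
by have -> : (d - delta' i - k i = d - delta i)%N by rewrite -(Hk i); lia.
Qed.

Lemma indep_family_eta d N :
  indep_family I delta Mt d N -> indep_family (gen_ideal I) delta' (Mbar' I k Mt) d N.
Proof.
move=> [ms [Hms Hind]]; exists (fun j => Defs.eta k (ms j)); split.
  move=> j; have [hm ht] := Hms j; split; last exact: eta_thom.
  apply: etaM_Mbar'; split; first exact/poly_eta/submodule_poly.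
  by exists (ms j); split => // i; apply: gen_ideal0 => w; rewrite /ser_sub subrr.
move=> c Hc; apply: Hind => i; have := dehom_gen_ideal HI (Hc i).
rewrite dehom_lin; last by move=> j; apply/poly_eta/submodule_poly/(Hms j).1.
congr I; apply: functional_extensionality => w; apply: eq_bigr => j _.
by rewrite dehom_eta //; apply/submodule_poly/(Hms j).1.
Qed.

Lemma indep_family_dehom d N :
  indep_family (gen_ideal I) delta' (Mbar' I k Mt) d N -> indep_family I delta Mt d N.
Proof.
have [_ _ _ _ Mcomp] := HM.
move=> [ms' [Hms' Hind']].
pose P j a := Mt a /\ tequiv (gen_ideal I) (ms' j) (Defs.eta k a).
pose a j := epsilon (inhabits (fun _ => @ser_zero K X)) (P j).
have Ha j : P j (a j).
  by apply: epsilon_spec; have [_] := Mbar'_etaM (Hms' j).1.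
exists (fun j => tcomp delta d (a j)); split.
  by move=> j; split; [apply: Mcomp; exact: (Ha j).1 | exact: tcomp_thom].
move=> c Hc; apply: Hind' => i.
have E j := eta_tcomp_equiv (Hms' j).2 (Ha j).2 i.
pose m i w := \sum_(j < N) c j * tcomp delta d (a j) i w.
have Em : gen_ideal I (Defs.eta k m i) := gen_ideal_eta k (Hc i).
apply: gen_ideal_ext (gen_idealD (gen_ideal_lin c E) Em) => w.
rewrite /ser_add /ser_sub eta_lin -big_split; apply: eq_bigr => j _ /=; ring.
Qed.

End ComponentHomogenization.

Theorem mainTheorem1 (K : fieldType) (n r : nat)
  (I : ser K 'I_n -> Prop) (HI : graded_ideal I)
  (delta delta' : 'I_r -> nat)
  (Mt : ('I_r -> ser K 'I_n) -> Prop) (HM : graded_submodule I delta Mt)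
  (Hdd : forall i, (delta' i <= delta i)%N) :
  let k := fun i => (delta i - delta' i)%N in
  (forall g, etaM I k Mt g <-> Mbar' I k Mt g) /\
  (forall d N : nat,
     indep_family I delta Mt d N <->
     indep_family (gen_ideal I) delta' (Mbar' I k Mt) d N).
Proof.
move=> k; have Hk i : (k i + delta' i)%N = delta i by rewrite subnK ?Hdd.
split=> [g | d N]; split.
- exact: (etaM_Mbar' (X := 'I_n) HM).
- exact: (Mbar'_etaM (X := 'I_n) HI HM).
- exact: (indep_family_eta (X := 'I_n) HI HM Hk).
- exact: (indep_family_dehom (X := 'I_n) HI HM Hk).
Qed.
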